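(* Let $\Gamma$ be a labeled graph having a connected component with an odd number of edges. Then $c_\Gamma=0$.
   Context: A labeled graph with $V$ vertices and $E$ edges is a map $s:\{1,\ldots,E\}\to\mathcal{P}_2\{1,\ldots,V\}$ (edge $e$ joins the two vertices in $s(e)$; multiple edges allowed). Each edge with $s(e)=\{i,j\}$, $i<j$, is oriented $i\to j$. Define $c_\Gamma:=\sum_{\sigma\in S_V}\prod_{e:\,i\to j}\operatorname{sign}(\sigma(j)-\sigma(i))$, i.e. the sum over all renumberings of the vertices of $(-1)^{\#\text{edges whose orientation is inverted}}$, where after renumbering each edge is oriented from lower to higher label. *)

From mathcomp Require Import all_boot all_order all_algebra all_fingroup.
Set Implicit Arguments. Unset Strict Implicit. Unset Printing Implicit Defensive.
Import Order.TTheory GRing.Theory Num.Theory.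

(* A labeled graph with V vertices and E edges: each edge e joins the two
   distinct vertices (s e).1 < (s e).2, i.e. s e encodes the 2-subset
   {(s e).1, (s e).2}, oriented (s e).1 -> (s e).2.  Multiple edges allowed. *)
Record lgraph (V E : nat) := LGraph {
  ends : 'I_E -> 'I_V * 'I_V ;
  ends_lt : forall e, ((ends e).1 < (ends e).2)%N
}.

Definition sgn_nat (a b : nat) : int := if (b < a)%N then 1%R else (-1)%R.

Definition cGamma V E (G : lgraph V E) : int :=
  (\sum_(sigma : 'S_V) \prod_(e < E)
      sgn_nat (sigma (ends G e).2) (sigma (ends G e).1))%R.

Definition adj V E (G : lgraph V E) : rel 'I_V :=
  fun u v => [exists e : 'I_E,
     ((ends G e).1 == u) && ((ends G e).2 == v)
  || ((ends G e).1 == v) && ((ends G e).2 == u)].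

Definition component V E (G : lgraph V E) (v : 'I_V) : {set 'I_V} :=
  [set u | connect (adj G) v u].

Definition comp_edges V E (G : lgraph V E) (C : {set 'I_V}) : nat :=
  #|[set e : 'I_E | (ends G e).1 \in C]|.

Definition has_odd_component V E (G : lgraph V E) : Prop :=
  exists v : 'I_V, odd (comp_edges G (component G v)).

From mathcomp Require Import all_boot all_order all_algebra all_fingroup.
From mathcomp Require Import zify.
Set Implicit Arguments. Unset Strict Implicit. Unset Printing Implicit Defensive.
Import GRing.Theory Num.Theory.

(* Let C be a connected component, so that every edge has either both ends in
   C or none.  Composing each renumbering sigma with the permutation reversing
   the order of the labels sigma(C) is an involution of S_V; it inverts the
   orientation of exactly the edges of C and keeps the others.  When C has an
   odd number of edges it therefore pairs off the terms of c_Gamma with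
   opposite signs, so c_Gamma = - c_Gamma = 0. *)

Section Mirror.
Variables (T : eqType) (s : seq T).

Definition mirror (x : T) : T := nth x (rev s) (index x s).

Lemma mirror_out x : x \notin s -> mirror x = x.
Proof. by move=> xNs; rewrite /mirror nth_default // size_rev memNindex. Qed.

Lemma mirror_in x : x \in s -> mirror x = nth x s (size s - (index x s).+1).
Proof. by move=> xs; rewrite /mirror nth_rev ?index_mem. Qed.

Lemma mirror_mem x : x \in s -> mirror x \in s.
Proof.
move=> xs; rewrite mirror_in // mem_nth //.
by have := index_mem x s; rewrite xs; lia.
Qed.

Hypothesis s_uniq : uniq s.

Lemma index_mirror x : x \in s -> index (mirror x) s = size s - (index x s).+1.
Proof.
move=> xs; rewrite mirror_in // index_uniq //.
by have := index_mem x s; rewrite xs; lia.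
Qed.

Lemma mirrorK : involutive mirror.
Proof.
move=> x; have [xs | xNs] := boolP (x \in s); last by rewrite !mirror_out.
have ltx : index x s < size s by rewrite index_mem.
rewrite (mirror_in (mirror_mem xs)) index_mirror // (set_nth_default x); last by lia.
have -> : size s - (size s - (index x s).+1).+1 = index x s by lia.
exact: nth_index.
Qed.

End Mirror.

Lemma sorted_index_lt (T : eqType) (r : rel T) (s : seq T) :
  irreflexive r -> transitive r -> sorted r s ->
  {in s &, forall x y, r x y -> index x s < index y s}.
Proof.
move=> r_irr r_trans s_sorted x y xs ys rxy.
case: ltngtP => // [ltyx | eqxy].
  have ryx := sorted_ltn_index r_trans s_sorted _ _ ys xs ltyx.
  by have := r_trans _ _ _ rxy ryx; rewrite r_irr.
by move: rxy; rewrite -(nth_index x xs) eqxy (nth_index x ys) r_irr.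
Qed.

Lemma mirror_rev (T : eqType) (r : rel T) (s : seq T) :
  irreflexive r -> transitive r -> sorted r s ->
  {in s &, forall x y, r x y -> r (mirror s y) (mirror s x)}.
Proof.
move=> r_irr r_trans s_sorted x y xs ys rxy.
have s_uniq := sorted_uniq r_trans r_irr s_sorted.
apply: sorted_ltn_index (mirror_mem ys) (mirror_mem xs) _ => //.
have := sorted_index_lt r_irr r_trans s_sorted xs ys rxy.
have := index_mem y s; rewrite ys !index_mirror //; lia.
Qed.

Section RevPerm.
Variables (n : nat) (S : {set 'I_n}).

Let ltn_ord_rel : rel 'I_n := fun a b => a < b.

Lemma sorted_enum_set : sorted ltn_ord_rel (enum S).
Proof.
have -> : enum S = filter (mem S) (enum 'I_n) by rewrite enumT.
apply: sorted_filter; first by move=> a b c; apply: ltn_trans.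
by have := iota_ltn_sorted 0 n; rewrite -val_enum_ord sorted_map.
Qed.

Definition rev_perm : 'S_n := perm (inv_inj (mirrorK (enum_uniq (mem S)))).

Lemma rev_permE x : rev_perm x = mirror (enum S) x.
Proof. by rewrite permE. Qed.

Lemma rev_perm_out x : x \notin S -> rev_perm x = x.
Proof. by move=> xNS; rewrite rev_permE mirror_out ?mem_enum. Qed.

Lemma rev_perm_in x : x \in S -> rev_perm x \in S.
Proof. by move=> xS; rewrite rev_permE -mem_enum mirror_mem ?mem_enum. Qed.

Lemma rev_permK : (rev_perm * rev_perm = 1)%g.
Proof. by apply/permP => x; rewrite permM perm1 !rev_permE mirrorK ?enum_uniq. Qed.

Lemma rev_perm_imset : rev_perm @: S = S.
Proof.
apply/setP => x; apply/imsetP/idP => [[y yS ->] | xS]; first exact: rev_perm_in.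
by exists (rev_perm x); rewrite ?rev_perm_in // -permM rev_permK perm1.
Qed.

Lemma rev_perm_lt : {in S &, forall x y : 'I_n, x < y -> rev_perm y < rev_perm x}.
Proof.
move=> x y xS yS ltxy; rewrite !rev_permE.
apply: (mirror_rev (r := ltn_ord_rel)) ltxy; rewrite ?mem_enum //.
- exact: ltnn.
- exact: ltn_trans.
- exact: sorted_enum_set.
Qed.

End RevPerm.

Lemma sgn_nat_rev_perm n (S : {set 'I_n}) :
  {in S &, forall x y : 'I_n, x != y ->
    sgn_nat (rev_perm S x) (rev_perm S y) = (- sgn_nat x y)%R}.
Proof.
move=> x y xS yS neq_xy; rewrite /sgn_nat.
case: (ltngtP x y) => [ltxy | ltyx | /val_inj eq_xy]; last by rewrite eq_xy eqxx in neq_xy.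
- by rewrite rev_perm_lt // opprK.
- by rewrite ltnNge ltnW ?rev_perm_lt.
Qed.

Section Twist.
Variables (V E : nat) (G : lgraph V E).

Definition edge_closed (C : {set 'I_V}) :=
  forall e, ((ends G e).1 \in C) = ((ends G e).2 \in C).

Lemma component_edge_closed v : edge_closed (component G v).
Proof.
have adj_ends e : adj G (ends G e).1 (ends G e).2 && adj G (ends G e).2 (ends G e).1.
  by apply/andP; split; apply/existsP; exists e; rewrite !eqxx ?orbT.
move=> e; have /andP[adj12 adj21] := adj_ends e; rewrite !inE.
by apply/idP/idP => /connect_trans; apply; apply: connect1.
Qed.

Definition sgn_term (sigma : 'S_V) : int :=
  (\prod_(e < E) sgn_nat (sigma (ends G e).2) (sigma (ends G e).1))%R.

Variables (C : {set 'I_V}) (C_closed : edge_closed C).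

Definition twist (sigma : 'S_V) : 'S_V := (sigma * rev_perm (sigma @: C))%g.

Lemma twistK : involutive twist.
Proof.
move=> sigma; rewrite {1}/twist; have -> : twist sigma @: C = sigma @: C.
  rewrite -[RHS](rev_perm_imset (sigma @: C)) -imset_comp.
  by apply: eq_imset => x; rewrite permM.
by rewrite /twist -mulgA rev_permK mulg1.
Qed.

Lemma sgn_nat_twist sigma e :
  sgn_nat (twist sigma (ends G e).2) (twist sigma (ends G e).1) =
  ((if (ends G e).1 \in C then -1 else 1) *
     sgn_nat (sigma (ends G e).2) (sigma (ends G e).1))%R.
Proof.
rewrite !permM; case: ifP => [e1C | e1NC].
  have e2C : (ends G e).2 \in C by rewrite -C_closed.
  rewrite mulN1r sgn_nat_rev_perm ?imset_f // (inj_eq perm_inj).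
  by rewrite -val_eqE gtn_eqF ?ends_lt.
have e2NC : (ends G e).2 \notin C by rewrite -C_closed e1NC.
by rewrite mul1r !rev_perm_out ?mem_imset ?e1NC //; apply: perm_inj.
Qed.

Lemma sgn_term_twist sigma :
  sgn_term (twist sigma) = ((-1) ^+ comp_edges G C * sgn_term sigma)%R.
Proof.
rewrite /sgn_term (eq_bigr _ (fun e _ => sgn_nat_twist sigma e)) big_split /=.
rewrite -big_mkcond prodr_const; congr (_ ^+ _ * _)%R.
by apply: eq_card => e; rewrite !inE.
Qed.

Lemma cGamma_edge_closed : cGamma G = ((-1) ^+ comp_edges G C * cGamma G)%R.
Proof.
rewrite {1}/cGamma (reindex_inj (inv_inj twistK)) mulr_sumr.
by apply: eq_bigr => sigma _; rewrite -sgn_term_twist.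
Qed.

End Twist.

Theorem lemma5 (V E : nat) (G : lgraph V E) :
  has_odd_component G -> cGamma G = 0%R.
Proof.
move=> [v odd_edges].
have := cGamma_edge_closed (component_edge_closed G v).
rewrite -signr_odd odd_edges expr1 mulN1r => /eqP.
by rewrite -subr_eq0 opprK -mulr2n mulrn_eq0 => /eqP.
Qed.
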